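(* Let $n,m\in\mathbb{N}$ with $n\ge3$, $\sigma\in[5/n,1]$ and $\varepsilon\in[0,1/4]$. Let $A$ be a (possibly randomized) algorithm such that for every $n$-arm bandit $q$, $A$ makes $m$ (possibly adaptive) queries to the bandit oracle $\mathcal{O}_q$ and outputs a $\sigma$-smooth strategy $\pi$ that, with probability at least $2/3$, is an $\varepsilon$-optimal $\sigma$-smooth strategy for $q$. Then $m\ge n/6$.
   Context: An $n$-arm bandit is a vector $q=(q_1,\dots,q_n)$ of probability distributions on $[0,1]$; its oracle $\mathcal{O}_q$, on query $i\in[n]$, returns an independent sample from $q_i$. The expected utilities vector is $u$ with $u_i=\mathbb{E}_{x\sim q_i}[x]$. A strategy is a distribution $\pi$ on $[n]$ with expected utility $\pi\cdot u=\sum_i\pi_iu_i$; it is $\sigma$-smooth if $\pi_i\le\sigma$ for all $i$; it is an $\varepsilon$-optimal $\sigma$-smooth strategy for $q$ if it is $\sigma$-smooth and $\pi'\cdot u-\pi\cdot u\le\varepsilon$ for every $\sigma$-smooth strategy $\pi'$. *)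

From HB Require Import structures.
From mathcomp Require Import all_boot all_order all_algebra.
From mathcomp Require Import all_classical all_reals all_analysis.
Set Implicit Arguments. Unset Strict Implicit. Unset Printing Implicit Defensive.
Import Order.TTheory GRing.Theory Num.Theory.
Local Open Scope ring_scope.
Local Open Scope classical_set_scope.

(* An n-arm bandit: a vector of probability distributions on [0,1]
   (probability measures on the Borel sets of R giving mass 1 to [0,1]). *)
Definition bandit (R : realType) (n : nat) (q : 'I_n -> probability R R) : Prop :=
  forall i, q i `[0%R, 1%R] = 1%E.

Definition utility (R : realType) (n : nat) (q : 'I_n -> probability R R) (i : 'I_n) : R :=
  fine (\int[q i]_x (x%:E))%E.

Definition dotp (R : realType) (n : nat) (a b : 'I_n -> R) : R := \sum_(i < n) a i * b i.

Definition is_strategy (R : realType) (n : nat) (pi : 'I_n -> R) : Prop :=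
  (forall i, 0 <= pi i) /\ \sum_(i < n) pi i = 1.

Definition smooth (R : realType) (n : nat) (sigma : R) (pi : 'I_n -> R) : Prop :=
  is_strategy pi /\ forall i, pi i <= sigma.

Definition eps_opt_smooth (R : realType) (n : nat) (q : 'I_n -> probability R R)
  (sigma eps : R) (pi : 'I_n -> R) : Prop :=
  smooth sigma pi /\
  forall pi', smooth sigma pi' -> dotp pi' (utility q) - dotp pi (utility q) <= eps.

(* Deterministic adaptive query algorithm making k queries: either it has
   no query left and outputs a vector 'I_n -> R, or it queries arm i and
   continues depending on the observed sample x : R. *)
Fixpoint dalg (R : realType) (n k : nat) : Type :=
  match k with
  | 0 => 'I_n -> R
  | k'.+1 => ('I_n * (R -> dalg R n k'))%type
  end.

Fixpoint all_outputs (R : realType) (n k : nat) (P : ('I_n -> R) -> Prop) :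
  dalg R n k -> Prop :=
  match k return dalg R n k -> Prop with
  | 0 => fun d => P d
  | k'.+1 => fun d => forall x : R, all_outputs P (d.2 x)
  end.

(* probability (as an extended real) that the output satisfies P when each
   query to arm i returns an independent sample from q i *)
Fixpoint succ_prob (R : realType) (n : nat) (q : 'I_n -> probability R R)
  (P : ('I_n -> R) -> Prop) (k : nat) : dalg R n k -> \bar R :=
  match k return dalg R n k -> \bar R with
  | 0 => fun d => (if `[< P d >] then 1 else 0)%:E
  | k'.+1 => fun d => (\int[q d.1]_x succ_prob q P (d.2 x))%E
  end.

(* A randomized algorithm: a probability space (Omega, P) of internal
   randomness and, for each random seed, a deterministic adaptive algorithm.
   Probability of the output satisfying Q on bandit q: *)
Definition rsucc_prob (R : realType) (n m : nat) (d : measure_display)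
  (Omega : measurableType d) (P : probability Omega R)
  (A : Omega -> dalg R n m) (q : 'I_n -> probability R R)
  (Q : ('I_n -> R) -> Prop) : \bar R :=
  (\int[P]_w succ_prob q Q (A w))%E.

From HB Require Import structures.
From mathcomp Require Import all_boot all_order all_algebra.
From mathcomp Require Import all_classical all_reals all_analysis.
From mathcomp Require Import measurable_realfun.
From mathcomp Require Import ring lra zify.
Import Order.TTheory GRing.Theory Num.Theory.
Local Open Scope ring_scope.

(* A Yao-type argument on deterministic instances.  For a set [G] of [t]
   arms, let every arm of [G] pay exactly 1 and every other arm exactly 0.
   The best sigma-smooth value is then [min(1, t sigma)], so an
   eps-optimal strategy puts mass at least [min(1, t sigma) - eps] on [G].
   Against a uniformly random [G], each of the [m] queries finds an arm of
   [G] with probability at most [t / (n - m)], and such an arm earns at most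
   [sigma]; the rest of the mass lands on [G] with probability at most
   [t / (n - m)] as well.  Hence the expected mass on [G] is at most
   [(sigma m + 1) t / (n - m)], and averaging over [G] and over the random
   seed gives [2/3 (min(1, t sigma) - eps) <= (sigma m + 1) t / (n - m)],
   which fails for [m < n/6] and a suitable [t] close to [1 / sigma]. *)

Set Implicit Arguments.
Unset Strict Implicit.
Unset Printing Implicit Defensive.
Import HBNNSimple.

Section LowerIntegral.

(* The integrands below are not assumed measurable: [\int] is then the
   supremum of the integrals of the simple functions it dominates. *)
Lemma ge0_integral_dirac_le (R : realType) (a : R) (g : R -> \bar R) :
  (forall x, 0 <= g x)%E -> (\int[\d_a]_x g x <= g a)%E.
Proof.
move=> g0; rewrite ge0_integralE // patch_setT.
apply: ge_ereal_sup => _ [h hle <-].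
have := integral_nnsfun (\d_a) (@measurableT _ R) h; rewrite patch_setT => <-.
rewrite integral_dirac //; last by apply/measurable_EFinP; exact: measurable_funPT.
by rewrite diracE in_setT mul1e; exact: hle.
Qed.

Variables (R : realType) (d : measure_display) (Omega : measurableType d).
Variable P : probability Omega R.

Lemma ge0_integral_nnsfun_approx (s : Omega -> \bar R) (c e : R) :
  (forall w, 0 <= s w)%E -> (c%:E <= \int[P]_w s w)%E -> 0 < e ->
  exists h : {nnsfun Omega >-> R},
    (forall w, (h w)%:E <= s w)%E /\ ((c - e)%:E < \int[P]_w (h w)%:E)%E.
Proof.
move=> s0 cs e0; rewrite ge0_integralE // patch_setT in cs.
have : ((c - e)%:E < ereal_sup [set sintegral P h | h in
    [set h : {nnsfun Omega >-> R} | forall w, ((h w)%:E <= s w)%E]])%E.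
  by apply: lt_le_trans cs; rewrite lte_fin ltrBlDr ltrDl.
move=> /ereal_sup_gt [_ [h hs <-] lt]; exists h; split => //.
by rewrite integral_nnsfun // patch_setT.
Qed.

Lemma sum_integral_lb_le (I : finType) (J : pred I) (s : I -> Omega -> \bar R)
    (K c : R) :
  (forall i w, 0 <= s i w)%E ->
  (forall w, \sum_(i | J i) s i w <= K%:E)%E ->
  (forall i, J i -> c%:E <= \int[P]_w s i w)%E ->
  \sum_(i | J i) c <= K.
Proof.
move=> s0 sK sc; rewrite leNgt; apply/negP => Kc.
pose N : R := \sum_(i | J i) 1.
have N0 : 0 <= N by rewrite sumr_ge0.
have SN : \sum_(i | J i) c = N * c.
  by rewrite mulr_suml; apply: eq_bigr => i _; rewrite mul1r.
rewrite SN in Kc.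
pose e := (N * c - K) / (N + 1).
have e0 : 0 < e by rewrite divr_gt0 // ?subr_gt0 // ltr_wpDl.
have /choice [h hP] : forall i, exists h : {nnsfun Omega >-> R}, J i ->
    (forall w, (h w)%:E <= s i w)%E /\ ((c - e)%:E < \int[P]_w (h w)%:E)%E.
  move=> i; case Ji: (J i); last by exists nnsfun0.
  by have [h hh] := ge0_integral_nnsfun_approx (s0 i) (sc i Ji) e0; exists h.
have hmeas i : measurable_fun setT (fun w => (h i w)%:E).
  by apply/measurable_EFinP; exact: measurable_funPT.
have sum_le : (\sum_(i | J i) \int[P]_w (h i w)%:E <= K%:E)%E.
  rewrite -big_filter -ge0_integral_sum //; last by move=> i w _; rewrite lee_fin.
  apply: (@le_trans _ _ (\int[P]_w (cst K%:E w))%E).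
    apply: ge0_le_integral => //.
    - by move=> w _; apply: sume_ge0 => i _; rewrite lee_fin.
    - exact: emeasurable_sum.
    - move=> w _ /=; rewrite big_filter; apply: le_trans (sK w).
      by apply: lee_sum => i Ji; exact: (hP i Ji).1.
  rewrite integral_cst // (_ : _ [set: Omega]%classic = 1%E) ?mule1 //.
  exact: probability_setT.
have sum_ge : ((N * (c - e))%:E <= \sum_(i | J i) \int[P]_w (h i w)%:E)%E.
  rewrite mulr_suml -sumEFin; apply: lee_sum => i Ji; rewrite mul1r.
  exact/ltW/(hP i Ji).2.
have := le_trans sum_ge sum_le; rewrite lee_fin leNgt => /negP; apply.
have -> : N * (c - e) = K + (N * c - K) / (N + 1).
  by rewrite /e; field; rewrite addr_eq0; apply/negP => /eqP HN; move: N0; rewrite HN; lra.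
by rewrite ltrDl divr_gt0 // ?subr_gt0 // ltr_wpDl.
Qed.

End LowerIntegral.

Section DiracBandit.
Variables (R : realType) (n : nat).

Definition dirac_bandit (v : 'I_n -> R) : 'I_n -> probability R R :=
  fun i => \d_(v i).

Fixpoint run k : dalg R n k -> ('I_n -> R) -> 'I_n -> R :=
  match k return dalg R n k -> ('I_n -> R) -> 'I_n -> R with
  | 0 => fun D _ => D
  | k'.+1 => fun D v => run (D.2 (v D.1)) v
  end.

Lemma all_outputs_run (Q : ('I_n -> R) -> Prop) k (D : dalg R n k) v :
  all_outputs Q D -> Q (run D v).
Proof. by elim: k D => [|k IH] D //= h; apply: IH. Qed.

Lemma succ_prob_ge0 (q : 'I_n -> probability R R) (Q : ('I_n -> R) -> Prop)
    k (D : dalg R n k) :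
  (0 <= succ_prob q Q D)%E.
Proof.
elim: k D => [|k IH] D /=; first by case: ifP; rewrite lee_fin.
by apply: integral_ge0 => x _; exact: IH.
Qed.

Lemma succ_prob_dirac_le (v : 'I_n -> R) (Q : ('I_n -> R) -> Prop)
    k (D : dalg R n k) :
  (succ_prob (dirac_bandit v) Q D <= (if `[< Q (run D v) >] then 1 else 0)%:E)%E.
Proof.
elim: k D => [|k IH] D //=; apply: le_trans (IH _).
by apply: ge0_integral_dirac_le => x; exact: succ_prob_ge0.
Qed.

Lemma bandit_dirac (v : 'I_n -> R) :
  (forall i, 0 <= v i <= 1) -> bandit (dirac_bandit v).
Proof.
move=> v01 i; rewrite /dirac_bandit /= diracE.
by case/andP: (v01 i) => v0 v1; rewrite mem_set //= in_itv /= v0 v1.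
Qed.

Lemma utility_dirac (v : 'I_n -> R) i : utility (dirac_bandit v) i = v i.
Proof. by rewrite /utility /= integral_dirac //= indicE in_setT mul1r. Qed.

End DiracBandit.

Section SetTrace.
Variable T : finType.
Implicit Types (G Q F : {set T}) (i : T).

Lemma setIU1_eqU1 G Q F i : i \notin Q -> F \subset Q ->
  (G :&: (i |: Q) == i |: F) = (G :&: Q == F) && (i \in G).
Proof.
move=> iQ FQ; have iF : i \notin F by apply: contra iQ; apply: (fintype.subsetP FQ).
apply/eqP/andP => [GQF|[/eqP GQF iG]]; last first.
  apply/finset.setP => x; move/finset.setP/(_ x): GQF; rewrite !inE.
  by case: (eqVneq x i) => [->|] //=; rewrite iG.
have iG : i \in G by move/finset.setP/(_ i): GQF; rewrite !inE eqxx /= => /andP[].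
split=> //; apply/eqP/finset.setP => x; move/finset.setP/(_ x): GQF; rewrite !inE.
by case: (eqVneq x i) => [->|] //=; rewrite (negbTE iQ) (negbTE iF) andbF.
Qed.

Lemma setIU1_eq G Q F i : i \notin Q -> F \subset Q ->
  (G :&: (i |: Q) == F) = (G :&: Q == F) && (i \notin G).
Proof.
move=> iQ FQ; have iF : i \notin F by apply: contra iQ; apply: (fintype.subsetP FQ).
apply/eqP/andP => [GQF|[/eqP GQF iG]]; last first.
  apply/finset.setP => x; move/finset.setP/(_ x): GQF; rewrite !inE.
  by case: (eqVneq x i) => [->|] //=; rewrite (negbTE iG) (negbTE iF).
have iG : i \notin G.
  by apply/negP => iG; move/finset.setP/(_ i): GQF; rewrite !inE eqxx iG (negbTE iF).
split=> //; apply/eqP/finset.setP => x; move/finset.setP/(_ x): GQF; rewrite !inE.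
by case: (eqVneq x i) => [->|] //=; rewrite (negbTE iQ) (negbTE iF) (negbTE iG).
Qed.

End SetTrace.

Section Consistent.
Variables n t : nat.
Implicit Types (G Q F : {set 'I_n}) (i : 'I_n).

(* The hidden set [G] of [t] good arms is compatible with having queried the
   arms [Q] and found exactly [F] among them good. *)
Definition consistent Q F G := (#|G| == t) && (G :&: Q == F).

Definition nconsistent Q F := #|[set G | consistent Q F G]|.

Lemma consistent_card Q F G : consistent Q F G -> (#|F| <= t)%N.
Proof.
by case/andP => /eqP <- /eqP <-; rewrite subset_leq_card // finset.subsetIl.
Qed.

Lemma consistentU1 Q F G i : i \notin Q -> F \subset Q ->
  consistent (i |: Q) (i |: F) G = consistent Q F G && (i \in G).
Proof. by move=> iQ FQ; rewrite /consistent setIU1_eqU1 // andbA. Qed.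

Lemma consistentU1_notin Q F G i : i \notin Q -> F \subset Q ->
  consistent (i |: Q) F G = consistent Q F G && (i \notin G).
Proof. by move=> iQ FQ; rewrite /consistent setIU1_eq // andbA. Qed.

Lemma nconsistent0 Q F : (t < #|F|)%N -> nconsistent Q F = 0%N.
Proof.
move=> tF; apply: eq_card0 => G; rewrite inE.
by apply/negP => /consistent_card; rewrite leqNgt tF.
Qed.

Lemma nconsistent_bin Q F : F \subset Q -> (#|F| <= t)%N ->
  nconsistent Q F = 'C(n - #|Q|, t - #|F|).
Proof.
move=> FQ ft; rewrite /nconsistent.
have -> : [set G | consistent Q F G] =
  [set B :|: F | B in [set A : {set 'I_n} | A \subset ~: Q & #|A| == (t - #|F|)%N]].
  apply/finset.setP => G; rewrite inE; apply/idP/imsetP.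
    move=> /andP[/eqP Gt /eqP GQ]; exists (G :\: Q).
      by rewrite inE finset.subDset finset.setUCr finset.subsetT /= cardsD GQ Gt.
    by rewrite -GQ finset.setUC finset.setID.
  move=> [B]; rewrite inE => /andP[BQ /eqP Bc] ->.
  have BQ0 : B :&: Q = finset.set0.
    by apply/eqP; rewrite finset.setI_eq0 finset.disjoints_subset.
  apply/andP; split.
    rewrite cardsU Bc.
    have -> : B :&: F = finset.set0.
      by apply/eqP; rewrite -finset.subset0 -BQ0 finset.setIS.
    by rewrite cards0 subn0 subnK.
  by rewrite finset.setIUl BQ0 finset.set0U (finset.setIidPl FQ).
rewrite card_in_imset; last first.
  move=> B1 B2; rewrite !inE => /andP[B1Q _] /andP[B2Q _] E.
  have: (B1 :|: F) :&: ~: Q = (B2 :|: F) :&: ~: Q by rewrite E.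
  rewrite !finset.setIUl (finset.setIidPl B1Q) (finset.setIidPl B2Q).
  have -> : F :&: ~: Q = finset.set0.
    by apply/eqP; rewrite finset.setI_eq0 finset.disjoints_subset finset.setCK.
  by rewrite !finset.setU0.
by rewrite cards_draws cardsCs finset.setCK card_ord.
Qed.

Lemma nconsistent_set0 : nconsistent finset.set0 finset.set0 = 'C(n, t).
Proof.
have [nt|tn] := leqP t n; first by rewrite nconsistent_bin ?finset.sub0set ?cards0 ?subn0.
rewrite bin_small // /nconsistent; apply: eq_card0 => G; rewrite inE /consistent.
by apply/negP => /andP[/eqP Gt _]; move: (max_card G); rewrite Gt card_ord leqNgt tn.
Qed.

Lemma nconsistentS Q F i : i \notin Q -> F \subset Q ->
  nconsistent Q F = (nconsistent (i |: Q) (i |: F) + nconsistent (i |: Q) F)%N.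
Proof.
move=> iQ FQ; rewrite /nconsistent -(cardsID [set G : {set 'I_n} | i \in G]).
congr (_ + _)%N; apply: eq_card => G; rewrite !inE.
  by rewrite consistentU1.
by rewrite consistentU1_notin //; case: (i \in G); rewrite /= ?andbT ?andbF.
Qed.

(* A uniformly random consistent [G] contains a given unqueried arm with
   probability [(t - #|F|) / (n - #|Q|)]. *)
Lemma nconsistent_ratio Q F i : i \notin Q -> F \subset Q ->
  (nconsistent (i |: Q) (i |: F) * (n - #|Q|) = nconsistent Q F * (t - #|F|))%N.
Proof.
move=> iQ FQ; have iF : i \notin F by apply: contra iQ; apply: (fintype.subsetP FQ).
have [ft|tf] := ltnP #|F| t; last first.
  rewrite nconsistent0 ?cardsU1 ?iF //.
  by rewrite (_ : (t - #|F|)%N = 0%N) ?muln0 //; apply/eqP; rewrite subn_eq0.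
rewrite !nconsistent_bin ?finset.setUS ?cardsU1 ?iF // 1?ltnW //.
rewrite (negbTE iQ) !add1n.
have := mul_bin_diag (n - #|Q|) (t - #|F|).-1.
by rewrite prednK ?subn_gt0 // mulnC [RHS]mulnC !subnS => <-.
Qed.

End Consistent.

Lemma adv_bound_mono_arith (R : realFieldType) (s f t k u : R) :
  0 <= s -> 0 <= t - f -> 0 <= k -> 0 < u ->
  s * f + (s * k + 1) * (t - f) / (u + 1) <=
  s * f + (s * (k + 1) + 1) * (t - f) / u.
Proof.
move=> s0 tf k0 u0; rewrite lerD2l ler_pdivrMr; last lra.
rewrite mulrAC ler_pdivlMr // [X in X <= _]mulrAC [X in _ <= X]mulrAC.
by apply: ler_wpM2r => //; nra.
Qed.

Lemma adv_bound_split_arith (R : realFieldType) (s c1 c0 f t k u : R) :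
  0 <= s -> 0 <= c1 -> 0 <= c0 -> 0 <= k -> 0 < u ->
  c1 * (u + 1 + k) = (c1 + c0) * (t - f) ->
  c1 * (s * (f + 1) + (s * k + 1) * (t - (f + 1)) / u) +
  c0 * (s * f + (s * k + 1) * (t - f) / u) <=
  (c1 + c0) * (s * f + (s * (k + 1) + 1) * (t - f) / u).
Proof.
move=> s0 c10 c00 k0 u0 ratio; rewrite -subr_ge0.
have -> : (c1 + c0) * (s * f + (s * (k + 1) + 1) * (t - f) / u) -
    (c1 * (s * (f + 1) + (s * k + 1) * (t - (f + 1)) / u) +
     c0 * (s * f + (s * k + 1) * (t - f) / u)) =
    (s * ((c1 + c0) * (t - f)) - c1 * s * u + c1 * (s * k + 1)) / u.
  by field; lra.
rewrite -ratio; apply: divr_ge0; last lra.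
have -> : s * (c1 * (u + 1 + k)) - c1 * s * u + c1 * (s * k + 1) =
  c1 * s + 2 * (c1 * s * k) + c1 by ring.
have c1s := mulr_ge0 c10 s0; have := mulr_ge0 c1s k0; lra.
Qed.

Section Adversary.
Variables (R : realType) (n t : nat) (sig : R).
Hypothesis sig0 : 0 <= sig.
Implicit Types (G Q F : {set 'I_n}) (p : 'I_n -> R).

Definition payoff G : 'I_n -> R := fun i => (i \in G)%:R.

Definition mass p G := \sum_(i in G) p i.

(* The mass bound with [q] arms queried, [f] of them found good, and [k]
   queries left; [n - q - k] is never truncated where it is used. *)
Definition adv_bound (q f k : nat) : R :=
  sig * f%:R + (sig * k%:R + 1) * (t%:R - f%:R) / (n - q - k)%:R.

Lemma adv_bound00 k : (k <= n)%N ->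
  adv_bound 0 0 k = (sig * k%:R + 1) * t%:R / (n%:R - k%:R).
Proof. by move=> kn; rewrite /adv_bound mulr0 add0r subr0 subn0 natrB. Qed.

Lemma adv_bound_queried (q f k : nat) : (q + k.+1 < n)%N -> (f <= t)%N ->
  adv_bound q f k <= adv_bound q f k.+1.
Proof.
move=> qk ft; rewrite /adv_bound.
have -> : (n - q - k = (n - q - k.+1).+1)%N by lia.
rewrite -!natr1; apply: adv_bound_mono_arith => //; rewrite ?subr_ge0 ?ler_nat //.
by rewrite ltr0n; lia.
Qed.

Lemma adv_bound_split (q f k c1 c0 : nat) : (q + k.+1 < n)%N -> (f <= t)%N ->
  (c1 * (n - q) = (c1 + c0) * (t - f))%N ->
  c1%:R * adv_bound q.+1 f.+1 k + c0%:R * adv_bound q.+1 f k <=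
  (c1 + c0)%:R * adv_bound q f k.+1.
Proof.
move=> qk ft ratio; rewrite /adv_bound.
have -> : (n - q.+1 - k = n - q - k.+1)%N by lia.
have nq : (n - q = (n - q - k.+1) + k.+1)%N by lia.
have a0 : 0 < (n - q - k.+1)%:R :> R by rewrite ltr0n; lia.
set a := (n - q - k.+1)%N in nq a0 *; rewrite nq in ratio.
have ratioR : c1%:R * (a%:R + 1 + k%:R) = (c1%:R + c0%:R) * (t%:R - f%:R) :> R.
  move/(congr1 (GRing.natmul (1 : R))): ratio.
  by rewrite !natrM !natrD (natrB _ ft) -?natr1 => <-; ring.
by rewrite natrD -!natr1; apply: adv_bound_split_arith; rewrite ?ler0n.
Qed.

Lemma nconsistentE Q F :
  (nconsistent t Q F)%:R = \sum_(G | consistent t Q F G) (1 : R).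
Proof. by rewrite /nconsistent -sum1_card natr_sum; apply: eq_bigl => G; rewrite inE. Qed.

Lemma sum_payoff_queried Q F i : i \in Q ->
  \sum_(G | consistent t Q F G) payoff G i = (i \in F)%:R * (nconsistent t Q F)%:R.
Proof.
move=> iQ; rewrite nconsistentE mulr_sumr.
apply: eq_bigr => G /andP[_ /eqP <-].
by rewrite mulr1 /payoff inE iQ andbT.
Qed.

Lemma sum_payoff_unqueried Q F i : i \notin Q -> F \subset Q ->
  \sum_(G | consistent t Q F G) payoff G i = (nconsistent t (i |: Q) (i |: F))%:R.
Proof.
move=> iQ FQ; rewrite nconsistentE (bigID (fun G => i \in G)) /=.
rewrite [X in _ + X]big1 ?addr0; last by move=> G /andP[_ /negbTE]; rewrite /payoff => ->.
rewrite (eq_bigr (fun _ => 1)); last by move=> G /andP[_]; rewrite /payoff => ->.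
by apply: eq_bigl => G; rewrite consistentU1.
Qed.

Lemma sum_consistent0 (h : {set 'I_n} -> R) Q F : (t < #|F|)%N ->
  \sum_(G | consistent t Q F G) h G = 0.
Proof.
move=> tF; rewrite big_pred0 // => G.
by apply/negP => /consistent_card; rewrite leqNgt tF.
Qed.

Lemma massE p G : mass p G = \sum_i payoff G i * p i.
Proof.
rewrite /mass big_mkcond; apply: eq_bigr => i _.
by rewrite /payoff; case: (i \in G); rewrite ?mul1r ?mul0r.
Qed.

(* Every queried arm contributes at most [sig]; every unqueried arm lies in
   a consistent [G] with the same probability [(t - #|F|) / (n - #|Q|)]. *)
Lemma sum_mass_le p Q F : smooth sig p -> F \subset Q -> (#|F| <= t)%N ->
  (#|Q| < n)%N ->
  \sum_(G | consistent t Q F G) mass p G <= (nconsistent t Q F)%:R * adv_bound #|Q| #|F| 0.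
Proof.
move=> [[p0 p1] ps] FQ ft Qn.
under eq_bigr do rewrite massE.
rewrite exchange_big /=; under eq_bigr do rewrite -mulr_suml.
set c := (nconsistent t Q F)%:R.
set K := c * (t%:R - #|F|%:R) / (n%:R - #|Q|%:R).
have nq0 : 0 < n%:R - #|Q|%:R :> R by rewrite subr_gt0 ltr_nat.
have K0 : 0 <= K.
  by apply: divr_ge0; [rewrite mulr_ge0 ?ler0n // subr_ge0 ler_nat | exact: ltW].
apply: (@le_trans _ _ (\sum_i (sig * c * (i \in F)%:R + K * p i))).
  apply: ler_sum => i _; case iQ: (i \in Q).
    rewrite sum_payoff_queried // -/c -[X in X <= _]addr0.
    apply: lerD; last exact: mulr_ge0.
    have b0 : 0 <= (i \in F)%:R :> R by rewrite ler0n.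
    have : 0 <= sig - p i by rewrite subr_ge0.
    by move/(mulr_ge0 (mulr_ge0 b0 (ler0n _ _ : 0 <= c))); nra.
  have := nconsistent_ratio t (negbT iQ) FQ.
  move/(congr1 (GRing.natmul (1 : R))); rewrite !natrM (natrB _ (ltnW Qn)) (natrB _ ft) => E.
  rewrite sum_payoff_unqueried ?iQ // -[_%:R](mulfK (lt0r_neq0 nq0)) E -/c -/K.
  by rewrite lerDr; apply: mulr_ge0; rewrite ?mulr_ge0 ?ler0n.
rewrite big_split /= -!mulr_sumr p1 mulr1.
have -> : \sum_(i < n) ((i \in F)%:R : R) = #|F|%:R.
  by rewrite -sum1_card natr_sum [RHS]big_mkcond; apply: eq_bigr => i _; case: (i \in F).
rewrite /adv_bound /K subn0 (natrB _ (ltnW Qn)) mulr0 add0r mul1r.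
by rewrite [X in _ <= X]mulrDr !mulrA [c * sig]mulrC.
Qed.

Lemma sum_mass_run_le k (D : dalg R n k) Q F :
  all_outputs (smooth sig) D -> F \subset Q -> (#|Q| + k < n)%N ->
  \sum_(G | consistent t Q F G) mass (run D (payoff G)) G
    <= (nconsistent t Q F)%:R * adv_bound #|Q| #|F| k.
Proof.
elim: k D Q F => [|k IH] D Q F hD FQ Qk;
  (have [tF|ft] := ltnP t #|F|; first by rewrite sum_consistent0 // nconsistent0 // mul0r).
  by apply: sum_mass_le => //; rewrite addn0 in Qk.
case: D hD => i g /= hD.
have [iQ|iQ] := boolP (i \in Q).
  rewrite (eq_bigr (fun G => mass (run (g (i \in F)%:R) (payoff G)) G)); last first.
    by move=> G /andP[_ /eqP GQ]; rewrite /payoff -GQ inE iQ andbT.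
  have Qk' : (#|Q| + k < n)%N by lia.
  apply: le_trans (IH _ _ _ (hD _) FQ Qk') _.
  by rewrite ler_wpM2l ?ler0n // adv_bound_queried.
have iF : i \notin F by apply: contra iQ; apply: (fintype.subsetP FQ).
rewrite (bigID (fun G => i \in G)) /=.
rewrite (eq_bigr (fun G => mass (run (g 1) (payoff G)) G)); last first.
  by move=> G /andP[_]; rewrite /payoff => ->.
rewrite [X in _ + X](eq_bigr (fun G => mass (run (g 0) (payoff G)) G)); last first.
  by move=> G /andP[_ /negbTE]; rewrite /payoff => ->.
rewrite (eq_bigl (consistent t (i |: Q) (i |: F))); last by move=> G; rewrite consistentU1.
rewrite [X in _ + X](eq_bigl (consistent t (i |: Q) F)); last first.
  by move=> G; rewrite consistentU1_notin.
have QiF : F \subset i |: Q by apply: fintype.subset_trans FQ (finset.subsetUr _ _).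
have Qik : (#|i |: Q| + k < n)%N by rewrite cardsU1 iQ add1n addSn -addnS.
have QiFi : i |: F \subset i |: Q by exact: finset.setUS.
apply: le_trans (lerD (IH _ _ _ (hD 1) QiFi Qik) (IH _ _ _ (hD 0) QiF Qik)) _.
rewrite (nconsistentS t iQ FQ) !cardsU1 iQ (negbTE iF) !add1n.
by apply: adv_bound_split => //; rewrite nconsistent_ratio // -nconsistentS.
Qed.

End Adversary.

Lemma dotp_utility_payoff (R : realType) (n : nat) (p : 'I_n -> R) (G : {set 'I_n}) :
  dotp p (utility (dirac_bandit (payoff R G))) = mass p G.
Proof.
rewrite /dotp massE; apply: eq_bigr => i _.
by rewrite utility_dirac mulrC.
Qed.

Lemma sum_if_in (R : realType) (n : nat) (G : {set 'I_n}) (a b : R) :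
  \sum_i (if i \in G then a else b) = #|G|%:R * a + (n - #|G|)%:R * b.
Proof.
rewrite (bigID (fun i : 'I_n => i \in G)) /=.
rewrite (eq_bigr (fun _ => a)); last by move=> i ->.
rewrite [X in _ + X](eq_bigr (fun _ => b)); last by move=> i /negbTE ->.
rewrite !sumr_const -[a *+ _]mulr_natl -[b *+ _]mulr_natl.
have -> : #|(fun i : 'I_n => i \notin G)| = #|[predC G]| by apply: eq_card.
by have := cardC G; rewrite card_ord => E; rewrite -(addKn #|G| #|[predC G]|) E.
Qed.

Section Witness.
Variables (R : realType) (n t : nat) (sig : R).
Hypotheses (t0 : (0 < t)%N) (tn : (t < n)%N) (sig0 : 0 < sig) (nsig : 1 <= n%:R * sig).
Implicit Types (G : {set 'I_n}) (p : 'I_n -> R).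

Definition opt_value : R := Num.min 1 (t%:R * sig).

Definition opt_witness G : 'I_n -> R :=
  fun i => if i \in G then opt_value / t%:R else (1 - opt_value) / (n - t)%:R.

Lemma smooth_opt_witness G : #|G| = t -> smooth sig (opt_witness G).
Proof.
move=> Gt; have tR : 0 < t%:R :> R by rewrite ltr0n.
have ntR : 0 < (n - t)%:R :> R by rewrite ltr0n subn_gt0.
have V1 : opt_value <= 1 by rewrite ge_min lexx.
have Vts : opt_value <= t%:R * sig by rewrite ge_min lexx orbT.
have V0 : 0 <= opt_value by rewrite le_min ler01 mulr_ge0 ?ler0n ?ltW.
split; [split|].
- by move=> i; rewrite /opt_witness; case: ifP => _; apply: divr_ge0; rewrite ?subr_ge0 ?ler0n.
- by rewrite /opt_witness sum_if_in Gt mulrCA mulfV ?lt0r_neq0 // mulr1 mulrCA mulfV ?lt0r_neq0 //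
    mulr1 addrC subrK.
- move=> i; rewrite /opt_witness; case: ifP => _; first by rewrite ler_pdivrMr // mulrC.
  rewrite ler_pdivrMr //; case: (leP 1 (t%:R * sig)) => [ts1|ts1].
    by rewrite /opt_value (min_idPl ts1) subrr mulr_ge0 ?ler0n ?ltW.
  rewrite /opt_value (min_idPr (ltW ts1)).
  by rewrite natrB ?(ltnW tn) // mulrBr [sig * t%:R]mulrC lerD2r mulrC.
Qed.

Lemma mass_opt_witness G : #|G| = t -> mass (opt_witness G) G = opt_value.
Proof.
move=> Gt; rewrite /mass (eq_bigr (fun _ => opt_value / t%:R)); last first.
  by move=> i iG; rewrite /opt_witness iG.
by rewrite sumr_const Gt -[_ *+ t]mulr_natl mulrCA mulfV ?mulr1 // lt0r_neq0 // ltr0n.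
Qed.

Lemma eps_opt_payoff_mass eps p G : #|G| = t ->
  eps_opt_smooth (dirac_bandit (payoff R G)) sig eps p -> opt_value - eps <= mass p G.
Proof.
move=> Gt [_ opt]; have := opt _ (smooth_opt_witness Gt).
by rewrite !dotp_utility_payoff mass_opt_witness //; lra.
Qed.

End Witness.

Section Reduction.
Variables (R : realType) (n t : nat) (sig : R).
Hypotheses (t0 : (0 < t)%N) (tn : (t < n)%N) (sig0 : 0 < sig) (nsig : 1 <= n%:R * sig).

Notation all_tsets := (consistent t (finset.set0 : {set 'I_n}) finset.set0).

Lemma count_eps_opt_run_le eps m (D : dalg R n m) :
  all_outputs (smooth sig) D -> (m < n)%N -> 0 < opt_value t sig - eps ->
  \sum_(G | all_tsets G)
     (if `[< eps_opt_smooth (dirac_bandit (payoff R G)) sig eps (run D (payoff R G)) >]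
      then 1 else 0)
  <= 'C(n, t)%:R * adv_bound n t sig 0 0 m / (opt_value t sig - eps).
Proof.
move=> hD mn th0; rewrite ler_pdivlMr // mulr_suml.
have := sum_mass_run_le t (ltW sig0) hD (finset.sub0set finset.set0).
rewrite !cards0 nconsistent_set0 => /(_ mn); apply: le_trans.
apply: ler_sum => G /andP[/eqP Gt _]; case: asboolP => [opt|_].
  by rewrite mul1r; exact: eps_opt_payoff_mass.
rewrite mul0r /mass sumr_ge0 // => i _.
by case: (all_outputs_run (payoff R G) hD) => [[p0 _] _].
Qed.

Lemma query_lower_bound eps m (d : measure_display) (Omega : measurableType d)
    (P : probability Omega R) (A : Omega -> dalg R n m) :
  (m < n)%N ->
  (forall w, all_outputs (smooth sig) (A w)) ->
  (forall q : 'I_n -> probability R R, bandit q ->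
     ((2 / 3 : R)%:E <= rsucc_prob P A q (eps_opt_smooth q sig eps))%E) ->
  2 / 3 * (opt_value t sig - eps) <= adv_bound n t sig 0 0 m.
Proof.
move=> mn hA hs.
have adv0 : 0 <= adv_bound n t sig 0 0 m.
  rewrite adv_bound00 ?(ltnW mn) // divr_ge0 // ?subr_ge0 ?ler_nat ?(ltnW mn) //.
  by rewrite mulr_ge0 ?ler0n // addr_ge0 // mulr_ge0 ?ler0n // ltW.
have [th0|] := ltP 0 (opt_value t sig - eps); last by lra.
pose C : R := 'C(n, t)%:R.
have C0 : 0 < C by rewrite /C ltr0n bin_gt0 ltnW.
have : \sum_(G | all_tsets G) (2 / 3 : R) <=
    C * adv_bound n t sig 0 0 m / (opt_value t sig - eps).
  apply: (sum_integral_lb_le (P := P) (s := fun G w => succ_prob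
    (dirac_bandit (payoff R G)) (eps_opt_smooth (dirac_bandit (payoff R G)) sig eps) (A w))).
  - by move=> G w; exact: succ_prob_ge0.
  - move=> w; apply: (@le_trans _ _ (\sum_(G | all_tsets G) (if `[< eps_opt_smooth
        (dirac_bandit (payoff R G)) sig eps (run (A w) (payoff R G)) >] then 1 else 0)%:E)%E).
      by apply: lee_sum => G _; exact: succ_prob_dirac_le.
    by rewrite sumEFin lee_fin count_eps_opt_run_le.
  - move=> G _; apply: hs; apply: bandit_dirac => i.
    by rewrite /payoff; case: (i \in G); rewrite /= ?lexx ?ler01.
have -> : \sum_(G | all_tsets G) (2 / 3 : R) = 2 / 3 * C.
  rewrite /C -nconsistent_set0 nconsistentE mulr_sumr.
  by apply: eq_bigr => G _; rewrite mulr1.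
rewrite ler_pdivlMr // => H; rewrite -(ler_pM2l C0).
by rewrite mulrCA mulrA.
Qed.

End Reduction.

Lemma hard_size_large_arith (R : realFieldType) (s T N M : R) :
  3 <= T -> 0 < s -> T * s <= 1 -> 1 < (T + 1) * s -> 5 <= N * s ->
  6 * M + 1 <= N -> 0 <= M ->
  (s * M + 1) * T < 2 / 3 * (T * s - 1 / 4) * (N - M).
Proof.
move=> T3 s0 Ts1 Ts2 Ns M6 M0; set x := T * s.
have x34 : 3 / 4 < x.
  have : 3 * (T + 1) * s <= 4 * x by rewrite /x; nra.
  nra.
have xN : 5 * T <= x * N by rewrite /x; nra.
have -> : (s * M + 1) * T = x * M + T by rewrite /x; ring.
nra.
Qed.

Lemma hard_size_one_arith (R : realFieldType) (s N : R) (m : nat) :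
  0 < s -> s <= 1 -> 1 < 2 * s -> 5 <= N * s -> 6 * m%:R + 1 <= N ->
  2 / 3 * (s - 1 / 4) * (N - m%:R) <= s * m%:R + 1 ->
  (s * m%:R + 1) * 2 < (N - m%:R) / 2.
Proof.
move=> s0 s1 s2 Ns; have [m4|] := leqP 4 m.
  have : 4 <= m%:R :> R by rewrite (ler_nat R 4).
  have : 0 <= (1 - s) * m%:R by rewrite mulr_ge0 ?ler0n // subr_ge0.
  nra.
case: m => [|[|[|[|//]]]] _ MN nA; rewrite ?mulr0n ?mulr1n in MN nA *.
- nra.
- have : 0 <= (s - 1 / 4) * (N - 7) by apply: mulr_ge0; lra.
  nra.
- have : 0 <= (s - 1 / 4) * (N - 13) by apply: mulr_ge0; lra.
  nra.
- have : 0 <= (s - 1 / 4) * (N - 19) by apply: mulr_ge0; lra.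
  nra.
Qed.

Lemma hard_size_two_arith (R : realFieldType) (s N : R) (m : nat) :
  0 < s -> 2 * s <= 1 -> 1 < 3 * s -> 5 <= N * s -> 6 * m%:R + 1 <= N ->
  2 / 3 * (2 * s - 1 / 4) * (N - m%:R) <= (s * m%:R + 1) * 2 ->
  (s * m%:R + 1) * 3 < (N - m%:R) / 2.
Proof.
move=> s0 s1 s2 Ns; have [m3|] := leqP 3 m.
  have : 3 <= m%:R :> R by rewrite (ler_nat R 3).
  have : 0 <= (1 - 2 * s) * m%:R by rewrite mulr_ge0 ?ler0n // subr_ge0.
  nra.
case: m => [|[|[|//]]] _ MN nA; rewrite ?mulr0n ?mulr1n in MN nA *.
- nra.
- nra.
- have : 0 <= (2 * s - 1 / 4) * (N - 13) by apply: mulr_ge0; lra.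
  nra.
Qed.

(* [t = floor (1 / s)] works unless it is 1 or 2, and then [t + 1] works. *)
Lemma exists_hard_size (R : realType) (s : R) (n m : nat) :
  0 < s -> s <= 1 -> 5 <= n%:R * s -> (6 * m < n)%N ->
  exists t, [/\ (0 < t)%N, (t < n)%N &
    (s * m%:R + 1) * t%:R / (n%:R - m%:R) < 2 / 3 * (opt_value t s - 1 / 4)].
Proof.
move=> s0 s1 ns mn.
have /andP[] : (Num.truncn s^-1)%:R <= s^-1 < (Num.truncn s^-1).+1%:R.
  by apply: truncn_itv; rewrite invr_ge0 ltW.
have : (0 < Num.truncn s^-1)%N by rewrite truncn_gt0 invr_ge1 ?unitfE ?lt0r_neq0.
move: (Num.truncn s^-1) => T T0 T1 T2.
have Ts1 : T%:R * s <= 1.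
  by rewrite -[X in _ <= X](mulVf (lt0r_neq0 s0)); apply: ler_wpM2r => //; exact: ltW.
have Ts2 : 1 < (T%:R + 1) * s.
  by rewrite -[X in X < _](mulVf (lt0r_neq0 s0)) ltr_pM2r // natr1.
have MN : 6 * m%:R + 1 <= n%:R :> R by rewrite -natrM natr1 ler_nat.
have m0 : 0 <= m%:R :> R by rewrite ler0n.
have nm : 0 < n%:R - m%:R :> R by lra.
have n5 : 5 <= n%:R :> R by nra.
have T1R : 1 <= T%:R :> R by rewrite (ler_nat R 1).
have TN : T%:R * 5 <= n%:R :> R by nra.
have optT : opt_value T s = T%:R * s by apply/min_idPr.
have [goodT|nA] :=
  ltrP ((s * m%:R + 1) * T%:R) (2 / 3 * (T%:R * s - 1 / 4) * (n%:R - m%:R)).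
  exists T; split => //; first by rewrite -(ltr_nat R); lra.
  by rewrite optT ltr_pdivrMr // mulrA.
have [T3|T3] := leqP 3 T.
  move: nA; rewrite leNgt => /negP[].
  by apply: hard_size_large_arith; rewrite ?(ler_nat R 3).
exists T.+1; split => //.
  have : T.+1%:R <= 3 :> R by rewrite (ler_nat R _ 3).
  by rewrite -(ltr_nat R); lra.
rewrite (_ : opt_value T.+1 s = 1); last by apply/min_idPl; rewrite -natr1 ltW.
rewrite ltr_pdivrMr //.
suff : (s * m%:R + 1) * T.+1%:R < (n%:R - m%:R) / 2 by lra.
move: T0 T3 Ts1 Ts2 nA; clear T1 T2 T1R TN optT.
case: T => [|[|[|//]]] // _ _; rewrite ?mulr1n => Ts1 Ts2 nA.
- by apply: hard_size_one_arith => //; lra.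
- by apply: hard_size_two_arith => //; lra.
Qed.

Theorem mainTheorem9 (R : realType) (n m : nat) (sigma eps : R)
  (d : measure_display) (Omega : measurableType d) (P : probability Omega R)
  (A : Omega -> dalg R n m) :
  (3 <= n)%N ->
  5 / n%:R <= sigma -> sigma <= 1 ->
  0 <= eps -> eps <= 1 / 4 ->
  (forall w, all_outputs (smooth sigma) (A w)) ->
  (forall q : 'I_n -> probability R R, bandit q ->
     (((2 / 3 : R))%:E <= rsucc_prob P A q (eps_opt_smooth q sigma eps))%E) ->
  n%:R / 6 <= m%:R :> R.
Proof.
move=> n3 sn s1 e0 e1 hA hs; rewrite leNgt; apply/negP => hm.
have n0 : 0 < n%:R :> R by rewrite ltr0n; lia.
have sig0 : 0 < sigma by apply: lt_le_trans sn; rewrite divr_gt0.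
have nsig : 5 <= n%:R * sigma by rewrite mulrC -ler_pdivrMr.
have mn : (6 * m < n)%N by rewrite -(ltr_nat R) natrM; move: hm; lra.
have [t [t0 tn hard]] := exists_hard_size sig0 s1 nsig mn.
have nsig1 : 1 <= n%:R * sigma by apply: le_trans nsig; rewrite ler1n.
have mn1 : (m < n)%N by lia.
have := query_lower_bound t0 tn sig0 nsig1 mn1 hA hs.
by rewrite adv_bound00 ?(ltnW mn1); move: hard e1; lra.
Qed.
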